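(* Let $(G,k)$ be an instance, $S\subseteq V$, and let $V_{\mathrm{tree}}$ be the union of the vertex sets of those connected components of $G-S$ that are trees. If $v\in S$ is large-dense and $|N(v)\cap V_{\mathrm{tree}}|\ge 2k+4$, then every feasible solution contains $v$; consequently $(G,k)$ is a yes-instance iff $(G-v,k-1)$ is.
   Context: Graphs are undirected, without self-loops, possibly with multi-edges. $N(v)$ is the set of vertices adjacent to $v$; $\rho(v)$ is the number of unordered pairs $\{u_1,u_2\}\subseteq N(v)$ joined by at least one edge. A vertex $v$ is large-dense if $|N(v)|>7k$ and $\rho(v)> |N(v)|(|N(v)|-1)/4$. A vertex set induces a clique if between any two distinct vertices there is exactly one edge, and a tree if it is connected and acyclic (two parallel edges form a cycle). A feasible solution is $X\subseteq V$, $|X|\le k$, with every component of $G-X$ a clique or a tree. *)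

From mathcomp Require Import all_boot all_order all_algebra.
Set Implicit Arguments. Unset Strict Implicit. Unset Printing Implicit Defensive.
Import Order.TTheory GRing.Theory Num.Theory.

(* A multigraph on vertices drawn from a finite type T:
   vertex set gV, and gm u w = number of edges between u and w. *)
Record mgraph (T : finType) := MGraph { gV : {set T}; gm : T -> T -> nat }.

Section Defs.
Variable T : finType.
Implicit Types (G : mgraph T) (W C S X : {set T}).

Definition wf_mgraph G :=
  [/\ forall u w, gm G u w = gm G w u,
      forall u, gm G u u = 0%N &
      forall u w, (0 < gm G u w)%N -> u \in gV G /\ w \in gV G].

Definition del_vertex G (v : T) : mgraph T := MGraph (gV G :\ v) (gm G).

Definition rel_in G W : rel T := fun x y => [&& x \in W, y \in W & (0 < gm G x y)%N].

Definition nbhd G v : {set T} := [set u | rel_in G (gV G) v u].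

Definition rho G v : nat :=
  #|[set p : {set T} | (p \subset nbhd G v) &&
     [exists u1, exists u2, [&& p == [set u1; u2], u1 != u2 & (0 < gm G u1 u2)%N]]]|.

Definition large_dense G (k : nat) v :=
  (7 * k < #|nbhd G v|)%N && (#|nbhd G v| * (#|nbhd G v| - 1) < 4 * rho G v)%N.

Definition comp G W x : {set T} := [set y | connect (rel_in G W) x y].

Definition induces_clique G C :=
  forall u w, u \in C -> w \in C -> u != w -> gm G u w = 1%N.

(* a cycle in the induced multigraph G[C]: two parallel edges, or a closed
   walk through >= 3 distinct vertices *)
Definition has_cycle G C :=
  (exists u w, [/\ u \in C, w \in C, u != w & (2 <= gm G u w)%N]) \/
  (exists s : seq T, [/\ (3 <= size s)%N, uniq s, {subset s <= C} &
                        cycle (rel_in G C) s]).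

Definition induces_tree G C :=
  (forall x y, x \in C -> y \in C -> connect (rel_in G C) x y) /\ ~ has_cycle G C.

Definition is_Vtree G S (Vt : {set T}) :=
  forall x, x \in Vt <-> (x \in gV G :\: S /\ induces_tree G (comp G (gV G :\: S) x)).

Definition feasible_b G (b : int) X :=
  [/\ X \subset gV G, (#|X|%:Z <= b)%R &
      forall x, x \in gV G :\: X ->
        induces_clique G (comp G (gV G :\: X) x) \/
        induces_tree G (comp G (gV G :\: X) x)].

Definition feasible G (k : nat) X := feasible_b G k%:Z X.

Definition yes_instance G (b : int) := exists X, feasible_b G b X.

End Defs.

From Pilot Require Import Defs.
From mathcomp Require Import all_boot all_order all_algebra.
From mathcomp Require Import zify.
Import Order.TTheory GRing.Theory Num.Theory.

Set Implicit Arguments.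
Unset Strict Implicit.
Unset Printing Implicit Defensive.

(* Suppose a feasible X misses v.  If the component of v in G - X is a
   clique, any three tree-neighbours of v outside X would be pairwise
   adjacent, i.e. form a triangle inside a tree component of G - S; so at
   most two tree-neighbours of v avoid X, and |X| >= 2k + 2 > k.  If that
   component is a tree, no edge joins two neighbours of v outside X, so each
   of the rho(v) edges among N(v) has an endpoint in N(v) ∩ X, whence
   rho(v) <= k |N(v)|; with rho(v) > |N(v)|(|N(v)| - 1)/4 this forces
   |N(v)| <= 4k, contradicting |N(v)| > 7k.  Once v lies in every solution,
   X |-> X minus v and Y |-> Y plus v exchange the solutions of (G, k) and
   (G - v, k - 1). *)

Section Solutions.
Variable T : finType.
Implicit Types (G : mgraph T) (W X Y C : {set T}) (v : T).

Lemma mem_comp_refl G W x : x \in Defs.comp G W x.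
Proof. by rewrite inE connect0. Qed.

Lemma mem_comp_edge G W x y :
  x \in W -> y \in W -> (0 < gm G x y)%N -> y \in Defs.comp G W x.
Proof. by move=> xW yW xy; rewrite inE connect1 // /rel_in xW yW. Qed.

Lemma nbhdP G v u :
  reflect [/\ v \in gV G, u \in gV G & (0 < gm G v u)%N] (u \in nbhd G v).
Proof. by rewrite inE; apply: and3P. Qed.

Lemma triangle_has_cycle G C a b c :
  a \in C -> b \in C -> c \in C -> [/\ a != b, b != c & c != a] ->
  (0 < gm G a b)%N -> (0 < gm G b c)%N -> (0 < gm G c a)%N -> has_cycle G C.
Proof.
move=> aC bC cC [ab bc ca] eab ebc eca; right; exists [:: a; b; c]; split=> //.
- by rewrite /= !inE negb_or ab bc eq_sym ca.
- by move=> x; rewrite !inE => /or3P[] /eqP->.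
- by rewrite /= /rel_in aC bC cC eab ebc eca.
Qed.

Lemma rho_le_edge_cover G v X :
  (forall u1 u2, u1 \in nbhd G v -> u2 \in nbhd G v -> (0 < gm G u1 u2)%N ->
     (u1 \in X) || (u2 \in X)) ->
  (rho G v <= #|nbhd G v :&: X| * #|nbhd G v|)%N.
Proof.
set N := nbhd G v => cover.
rewrite -cardsX; apply: leq_trans (leq_imset_card (fun p => [set p.1; p.2]) _).
apply/subset_leq_card/subsetP => p.
rewrite inE => /andP[pN /existsP[u1 /existsP[u2 /and3P[/eqP pE _ e12]]]].
have u1N : u1 \in N by apply: (subsetP pN); rewrite pE !inE eqxx.
have u2N : u2 \in N by apply: (subsetP pN); rewrite pE !inE eqxx orbT.
rewrite {}pE.
have /orP[u1X | u2X] := cover _ _ u1N u2N e12; apply/imsetP.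
- by exists (u1, u2); rewrite // in_setX in_setI u1N u1X u2N.
- by exists (u2, u1); rewrite /= 1?setUC // in_setX in_setI u2N u2X u1N.
Qed.

Section OneGraph.
Variables (G : mgraph T) (v : T) (X : {set T}).
Hypotheses (G_wf : wf_mgraph G) (vV : v \in gV G) (vX : v \notin X).

Let vW : v \in gV G :\: X. Proof. by rewrite inE vX vV. Qed.

Lemma nbhd_comp u : u \in nbhd G v -> u \notin X -> u \in Defs.comp G (gV G :\: X) v.
Proof. by case/nbhdP=> _ uV e uX; apply: mem_comp_edge; rewrite // inE uX. Qed.

Lemma clique_comp_tree_nbhd S Vt :
  is_Vtree G S Vt -> induces_clique G (Defs.comp G (gV G :\: X) v) ->
  (#|(nbhd G v :&: Vt) :\: X| <= 2)%N.
Proof.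
set A := (nbhd G v :&: Vt) :\: X => Vtree clique.
rewrite leqNgt; apply/card_gt2P => -[a [b [c [[aA bA cA] [ab bc ca]]]]].
have edge x y : x \in A -> y \in A -> x != y -> gm G x y = 1%N.
  by move=> /setDP[/setIP[xN _] xX] /setDP[/setIP[yN _] yX]; apply: clique;
     apply: nbhd_comp.
have /setDP[/setIP[_ /Vtree[aW [_ acyclic]]] _] := aA.
have inTree u : u \in A -> a != u -> u \in Defs.comp G (gV G :\: S) a.
  move=> uA au; have /setDP[/setIP[_ /Vtree[uW _]] _] := uA.
  by apply: mem_comp_edge; rewrite ?edge.
apply: acyclic; apply: (triangle_has_cycle (a := a) (b := b) (c := c)) => //.
- exact: mem_comp_refl.
- exact: inTree.
- by rewrite inTree // eq_sym.
- by rewrite edge.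
- by rewrite edge.
- by rewrite edge.
Qed.

Lemma tree_comp_rho :
  induces_tree G (Defs.comp G (gV G :\: X) v) ->
  (rho G v <= #|nbhd G v :&: X| * #|nbhd G v|)%N.
Proof.
case: G_wf => sym loop _ [_ acyclic].
apply: rho_le_edge_cover => u1 u2 u1N u2N e12.
rewrite -[_ || _]negbK negb_or; apply/negP => /andP[u1X u2X]; apply: acyclic.
have [_ _ ev1] := nbhdP _ _ _ u1N; have [_ _ ev2] := nbhdP _ _ _ u2N.
have neq x y : (0 < gm G x y)%N -> x != y.
  by apply: contraTneq => ->; rewrite loop.
apply: (triangle_has_cycle (a := v) (b := u1) (c := u2)).
- exact: mem_comp_refl.
- exact: nbhd_comp.
- exact: nbhd_comp.
- by rewrite !neq // sym.
- exact: ev1.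
- exact: e12.
- by rewrite sym.
Qed.

End OneGraph.

Lemma yes_instance_del_vertex G (b : int) v :
  v \in gV G -> (forall X, feasible_b G b X -> v \in X) ->
  yes_instance G b <-> yes_instance (del_vertex G v) (b - 1).
Proof.
move=> vV forced; split=> [[X solX] | [Y [YV Yb compY]]].
- have vX := forced X solX; case: solX => XV Xb compX.
  exists (X :\ v); split; first exact: setSD.
  + by move: Xb; rewrite (cardsD1 v X) vX; lia.
  + suff -> : (gV G :\ v) :\: (X :\ v) = gV G :\: X by [].
    by apply/setP => y; rewrite !inE; case: eqP => // ->; rewrite vX.
- have vY : v \notin Y by apply/negP => /(subsetP YV); rewrite !inE eqxx.
  exists (v |: Y); split.
  + by rewrite subUset sub1set vV (subset_trans YV) ?subD1set.
  + by move: Yb; rewrite cardsU1 vY; lia.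
  + suff <- : (gV G :\ v) :\: Y = gV G :\: (v |: Y) by [].
    by apply/setP => y; rewrite !inE negb_or -andbA andbCA.
Qed.

End Solutions.

Theorem mainTheorem16 (T : finType) (G : mgraph T) (k : nat)
    (S Vt : {set T}) (v : T) :
  wf_mgraph G -> S \subset gV G -> is_Vtree G S Vt ->
  v \in S -> large_dense G k v ->
  (2 * k + 4 <= #|nbhd G v :&: Vt|)%N ->
  (forall X, feasible G k X -> v \in X) /\
  (yes_instance G k%:Z <-> yes_instance (del_vertex G v) (k%:Z - 1)%R).
Proof.
move=> G_wf SV Vtree vS /andP[big dense] many_tree_nbrs.
have vV : v \in gV G := subsetP SV v vS.
suff forced X : feasible G k X -> v \in X.
  by split=> //; apply: yes_instance_del_vertex.
case=> _ Xk compX; apply/contraT => vX.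
have {}Xk : (#|X| <= k)%N by rewrite -lez_nat.
have vW : v \in gV G :\: X by rewrite inE vX vV.
have [clique | tree] := compX v vW.
- have := clique_comp_tree_nbhd vV vX Vtree clique.
  have := subset_leq_card (subsetIr (nbhd G v :&: Vt) X).
  rewrite cardsD; lia.
- have := tree_comp_rho G_wf vV vX tree.
  have := subset_leq_card (subsetIr (nbhd G v) X).
  nia.
Qed.
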